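(* Let $\{z_n\}_{n\ge 0}$ be a sequence of positive numbers satisfying the recurrence $$z_{n+1}=a_nz_{n}+b_nz_{n-1}\qquad (n\ge 1),$$ where $a_n>0$ and $b_n<0$. Assume that $a_{n+1}a_n+b_{n+1}>0$ for $n\geq 1$. For each $n$ let $$f_n(x)=\left[(a_{n+1}a_n+b_{n+1})x+a_{n+1}b_n\right](x-a_{n-1})x^6-b_{n-1}(a_nx+b_n)^4.$$ Suppose there exist two sequences $r(n)$ and $s(n)$ and a positive integer $N$ such that for all $n\geq N$: (i) $r(n)\leq\frac{z_{n}}{z_{n-1}}\leq s(n)\leq a_n$; (ii) $8(a_{n+1}a_n+b_{n+1})r(n)+5(a_{n+1}b_{n}-a_{n-1}a_{n+1}a_n-a_{n-1}b_{n+1})\geq0$ and $a_nr(n)+b_n\geq0$; (iii) $f_n''(r(n))>0$, $f_n'(r(n))>0$ and $f_n(s(n))<0$. Then the ratio sequence $\{z_{n+1}/z_n\}_{n\ge N}$ is ratio log-convex.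
   Context: A sequence $\{x_n\}$ of positive numbers is log-convex if $x_{n-1}x_{n+1}\ge x_n^2$ for all indices $n$ for which the three terms are defined. A sequence $\{x_n\}$ of positive numbers is called ratio log-convex if the sequence $\{x_{n+1}/x_n\}$ is log-convex. *)

From mathcomp Require Import all_boot all_order all_algebra.
Set Implicit Arguments. Unset Strict Implicit. Unset Printing Implicit Defensive.
Import Order.TTheory GRing.Theory Num.Theory.
Local Open Scope ring_scope.

Definition log_convex_from {R : realFieldType} (N : nat) (x : nat -> R) : Prop :=
  (forall n, (N <= n)%N -> 0 < x n) /\
  (forall n, (N < n)%N -> x n ^+ 2 <= x n.-1 * x n.+1).

Definition ratio_log_convex_from {R : realFieldType} (N : nat) (x : nat -> R) : Prop :=
  (forall n, (N <= n)%N -> 0 < x n) /\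
  log_convex_from N (fun n => x n.+1 / x n).

Definition fpoly {R : realFieldType} (a b : nat -> R) (n : nat) : {poly R} :=
  ((a n.+1 * a n + b n.+1) *: 'X + (a n.+1 * b n)%:P) * ('X - (a n.-1)%:P) * 'X^6
  - b n.-1 *: (a n *: 'X + (b n)%:P) ^+ 4.

From mathcomp Require Import all_boot all_order all_algebra.
From mathcomp Require Import ring lra.
Set Implicit Arguments. Unset Strict Implicit. Unset Printing Implicit Defensive.
Import Order.TTheory GRing.Theory Num.Theory.
Local Open Scope ring_scope.

(* Write p, q, u, v, w for z_(n-2), ..., z_(n+2).  Eliminating v and w with the
   recurrence gives f_n(u/q) = b_(n-1) q^-8 (w p u^6 - v^4 q^4), and the ratio
   log-convexity inequality at n-1 is exactly w p u^6 >= v^4 q^4.  As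
   b_(n-1) < 0 it is enough that f_n(z_n/z_(n-1)) < 0.  Hypotheses (ii) and
   (iii) make every non-constant Taylor coefficient of f_n at r(n)
   nonnegative, so f_n is nondecreasing on [r(n), +oo) and
   f_n(z_n/z_(n-1)) <= f_n(s(n)) < 0. *)

Lemma ler_horner (R : numDomainType) (p : {poly R}) x y :
  (forall i, (0 < i)%N -> 0 <= p`_i) -> 0 <= x -> x <= y -> p.[x] <= p.[y].
Proof.
move=> p_ge0 x_ge0 le_xy; rewrite !horner_coef; apply: ler_sum => -[[|i] _] _ /=.
  by rewrite !expr0.
apply: ler_wpM2l; first exact: p_ge0.
by apply: lerXn2r; rewrite ?nnegrE // (le_trans x_ge0).
Qed.

Section Octic.
Variables (R : realFieldType) (A B c d a b : R).

Definition octic : {poly R} :=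
  (A *: 'X + B%:P) * ('X - c%:P) * 'X^6 - d *: (a *: 'X + b%:P) ^+ 4.

Lemma horner_octic x :
  octic.[x] =
  A * x ^+ 8 + (B - A * c) * x ^+ 7 - B * c * x ^+ 6 - d * (a * x + b) ^+ 4.
Proof.
rewrite /octic !(hornerD, hornerN, hornerM, hornerZ, horner_exp, hornerX,
  hornerC, hornerXn).
ring.
Qed.

Lemma octicE : octic =
  A *: 'X^8 + (B - A * c) *: 'X^7 - (B * c) *: 'X^6 - d *: (a *: 'X + b%:P) ^+ 4.
Proof. by rewrite /octic -!mul_polyC polyCB !polyCM; ring. Qed.

Lemma horner_deriv_octic x :
  (octic^`()).[x] = 8%:R * A * x ^+ 7 + 7%:R * (B - A * c) * x ^+ 6
    - 6%:R * B * c * x ^+ 5 - 4%:R * a * d * (a * x + b) ^+ 3.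
Proof.
rewrite octicE !(derivMn, derivXn, deriv_exp, derivD, derivB, derivN, derivZ,
  derivC, derivX, derivM, alg_polyC).
rewrite !(hornerMn, hornerD, hornerN, hornerM, hornerZ, horner_exp, hornerX,
  hornerC, hornerXn) /=.
ring.
Qed.

Lemma horner_deriv2_octic x :
  (octic^`(2)).[x] = 56%:R * A * x ^+ 6 + 42%:R * (B - A * c) * x ^+ 5
    - 30%:R * B * c * x ^+ 4 - 12%:R * a ^+ 2 * d * (a * x + b) ^+ 2.
Proof.
rewrite octicE derivnS derivn1.
rewrite !(derivMn, derivXn, deriv_exp, derivD, derivB, derivN, derivZ,
  derivC, derivX, derivM, alg_polyC).
rewrite !(hornerMn, hornerD, hornerN, hornerM, hornerZ, horner_exp, hornerX,
  hornerC, hornerXn) /=.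
ring.
Qed.

(* The Taylor coefficients of [octic] at [r], arranged so that their signs can
   be read off: [P] is the quantity of hypothesis (ii), and [G], [F], [D] are
   positive when [A, c > 0] and [B, d < 0]. *)
Definition octic_taylor (r : R) : seq R :=
  let P := 8%:R * A * r + 5%:R * (B - A * c) in
  let G := A * c - B in let F := - (B * c) in let D := - d in
  let u := a * r + b in
  [:: octic.[r]; (octic^`()).[r]; (octic^`(2)).[r] / 2%:R;
      7%:R * r ^+ 4 * P + 20%:R * F * r ^+ 3 + 4%:R * D * u * a ^+ 3;
      35%:R / 4%:R * r ^+ 3 * (P + G) + 15%:R * F * r ^+ 2 + D * a ^+ 4;
      7%:R * r ^+ 2 * (P + 2%:R * G) + 6%:R * F * r;
      7%:R / 2%:R * r * (P + 3%:R * G) + F;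
      P + 4%:R * G;
      A].

Lemma horner_octic_taylor r t : (Poly (octic_taylor r)).[t] = octic.[r + t].
Proof.
rewrite horner_Poly /= horner_deriv2_octic horner_deriv_octic !horner_octic.
by field.
Qed.

Lemma octic_taylor_ge0 r :
  0 < A -> B < 0 -> 0 < c -> d < 0 -> 0 < a -> b < 0 ->
  0 <= 8%:R * A * r + 5%:R * (B - A * c) -> 0 <= a * r + b ->
  0 < (octic^`()).[r] -> 0 < (octic^`(2)).[r] ->
  forall i, (0 < i)%N -> 0 <= (Poly (octic_taylor r))`_i.
Proof.
move=> A_gt0 B_lt0 c_gt0 d_lt0 a_gt0 b_lt0 P_ge0 u_ge0 d1_gt0 d2_gt0 [//|i] _.
rewrite coef_Poly.
have r_gt0 : 0 < r by rewrite -(pmulr_rgt0 _ a_gt0); lra.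
have G_gt0 : 0 < A * c - B by have := mulr_gt0 A_gt0 c_gt0; lra.
have F_gt0 : 0 < - (B * c) by rewrite -mulNr mulr_gt0 // oppr_gt0.
have D_gt0 : 0 < - d by rewrite oppr_gt0.
case: i => [|[|[|[|[|[|[|[|i]]]]]]]] /=; last by rewrite nth_nil.
all: repeat first [ assumption | exact: ler0n | apply: ltW; assumption
                  | rewrite invr_ge0 | apply: addr_ge0 | apply: mulr_ge0 | apply: exprn_ge0 ].
Qed.

Lemma octic_nondecreasing r x y :
  0 < A -> B < 0 -> 0 < c -> d < 0 -> 0 < a -> b < 0 ->
  0 <= 8%:R * A * r + 5%:R * (B - A * c) -> 0 <= a * r + b ->
  0 < (octic^`()).[r] -> 0 < (octic^`(2)).[r] ->
  r <= x -> x <= y -> octic.[x] <= octic.[y].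
Proof.
move=> A_gt0 B_lt0 c_gt0 d_lt0 a_gt0 b_lt0 P_ge0 u_ge0 d1_gt0 d2_gt0 le_rx le_xy.
rewrite -(subrKC r x) -(subrKC r y) -!horner_octic_taylor.
apply: ler_horner; first exact: octic_taylor_ge0.
- by rewrite subr_ge0.
- by rewrite lerD2r.
Qed.

End Octic.

Lemma fpolyE (R : realFieldType) (a b : nat -> R) n :
  fpoly a b n =
  octic (a n.+1 * a n + b n.+1) (a n.+1 * b n) (a n.-1) (b n.-1) (a n) (b n).
Proof. by []. Qed.

Lemma octic_at_ratio (R : realFieldType) (A' B' c d a b p q u v w : R) :
  q != 0 -> u = c * q + d * p -> v = a * u + b * q -> w = A' * v + B' * u ->
  (octic (A' * a + B') (A' * b) c d a b).[u / q]
    = d / q ^+ 8 * (w * p * u ^+ 6 - v ^+ 4 * q ^+ 4).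
Proof. by move=> q_neq0 -> -> ->; rewrite horner_octic; field. Qed.

Lemma ratio_log_convex_ineq (R : realFieldType) (p q u v w : R) :
  0 < p -> 0 < q -> 0 < u -> 0 < v -> v ^+ 4 * q ^+ 4 <= w * p * u ^+ 6 ->
  (v / u / (u / q)) ^+ 2 <= u / q / (q / p) * (w / v / (v / u)).
Proof.
move=> p_gt0 q_gt0 u_gt0 v_gt0 le_vq_wpu; rewrite -subr_ge0.
have -> : u / q / (q / p) * (w / v / (v / u)) - (v / u / (u / q)) ^+ 2
    = (w * p * u ^+ 6 - v ^+ 4 * q ^+ 4) / (u ^+ 4 * q ^+ 2 * v ^+ 2).
  by field; rewrite !gt_eqF.
by rewrite divr_ge0 ?subr_ge0 // !mulr_ge0 // ?exprn_ge0 // ltW.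
Qed.

Theorem theorem2p11 (R : realFieldType) (z a b r s : nat -> R) (N : nat)
  (hz : forall n, 0 < z n)
  (hrec : forall n, (1 <= n)%N -> z n.+1 = a n * z n + b n * z n.-1)
  (ha : forall n, (1 <= n)%N -> 0 < a n)
  (hb : forall n, (1 <= n)%N -> b n < 0)
  (hab : forall n, (1 <= n)%N -> 0 < a n.+1 * a n + b n.+1)
  (hN : (2 <= N)%N)
  (hi : forall n, (N <= n)%N ->
     r n <= z n / z n.-1 /\ z n / z n.-1 <= s n /\ s n <= a n)
  (hii : forall n, (N <= n)%N ->
     0 <= 8%:R * (a n.+1 * a n + b n.+1) * r n
          + 5%:R * (a n.+1 * b n - a n.-1 * a n.+1 * a n - a n.-1 * b n.+1)
     /\ 0 <= a n * r n + b n)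
  (hiii : forall n, (N <= n)%N ->
     0 < ((fpoly a b n)^`(2)).[r n] /\ 0 < ((fpoly a b n)^`()).[r n]
     /\ (fpoly a b n).[s n] < 0) :
  ratio_log_convex_from N (fun n => z n.+1 / z n).
Proof.
(* [hN] and [s n <= a n] are not needed: every index used below is >= 1. *)
split=> [n _|]; first by rewrite divr_gt0.
split=> [n _|[//|k] /= ltNk]; first by rewrite !divr_gt0.
have leNm : (N <= k.+2)%N := leqW (ltnW ltNk).
have [le_r [le_s _]] := hi _ leNm.
have [P_ge0 u_ge0] := hii _ leNm.
have [d2_gt0 [d1_gt0 f_s_lt0]] := hiii _ leNm.
have f_lt0 : (fpoly a b k.+2).[z k.+2 / z k.+1] < 0.
  apply: le_lt_trans f_s_lt0; apply: (octic_nondecreasing (r := r k.+2));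
    rewrite ?hab ?pmulr_rlt0 ?ha ?hb //; lra.
rewrite fpolyE (octic_at_ratio _ (hrec k.+1 _) (hrec k.+2 _) (hrec k.+3 _))
  ?gt_eqF // in f_lt0.
rewrite nmulr_rlt0 ?subr_gt0 in f_lt0; last first.
  by rewrite pmulr_llt0 ?invr_gt0 ?exprn_gt0 ?hb.
exact/ratio_log_convex_ineq/ltW.
Qed.
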